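(* Let $X$ be a compact Hausdorff space, $\mathcal{A}$ a unital $C^*$-algebra with unit $1$, and $\mathcal{E}$ a $*$-subalgebra of $C(X,\mathcal{A})$. Then the constant function $1_X\equiv 1$ belongs to the uniform closure $\bar{\mathcal{E}}$ of $\mathcal{E}$ iff for every $x\in X$ there is $f\in\mathcal{E}$ such that $f(x)$ is invertible in $\mathcal{A}$.
   Context: $C(X,\mathcal{A})$ is the $C^*$-algebra of continuous maps $X\to\mathcal{A}$ with pointwise operations and supremum norm. *)

From HB Require Import structures.
From mathcomp Require Import all_boot all_order all_algebra.
From mathcomp Require Import all_classical all_reals all_analysis.
From mathcomp Require Import complex.
Set Implicit Arguments. Unset Strict Implicit. Unset Printing Implicit Defensive.
Import Order.TTheory GRing.Theory Num.Theory ComplexField.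
Import numFieldNormedType.Exports.
Local Open Scope ring_scope.
Local Open Scope classical_set_scope.

(* A unital C*-algebra structure on a complex Banach space
   A : completeNormedModType R[i] (vector space operations, norm, completeness
   and the norm topology come from A).  The record adds a bilinear,
   associative product with unit [one], submultiplicative norm, and an
   involution [star] which is additive, conjugate-linear,
   anti-multiplicative and satisfies the C*-identity.  (Hierarchy-Builder
   cannot join MathComp's normed-module and ring hierarchies, hence the
   explicit record.) *)
Record unital_Cstar_algebra (R : realType) (A : completeNormedModType R[i]) :=
  UnitalCstarAlgebra {
  amul : A -> A -> A;
  aone : A;
  astar : A -> A;
  mulA : forall x y z, amul x (amul y z) = amul (amul x y) z;
  mul1x : forall x, amul aone x = x;
  mulx1 : forall x, amul x aone = x;
  mulDl : forall x y z, amul (x + y) z = amul x z + amul y z;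
  mulDr : forall x y z, amul x (y + z) = amul x y + amul x z;
  mulZl : forall (a : R[i]) x y, amul (a *: x) y = a *: amul x y;
  mulZr : forall (a : R[i]) x y, amul x (a *: y) = a *: amul x y;
  normM_le : forall x y, `|amul x y| <= `|x| * `|y|;
  starK : forall x, astar (astar x) = x;
  starD : forall x y, astar (x + y) = astar x + astar y;
  starZ : forall (a : R[i]) x, astar (a *: x) = a^* *: astar x;
  starM : forall x y, astar (amul x y) = amul (astar y) (astar x);
  Cstar_identity : forall x, `|amul (astar x) x| = `|x| ^+ 2
}.

Section Defs.
Context (R : realType) (X : topologicalType) (A : completeNormedModType R[i])
        (CA : unital_Cstar_algebra A).

Definition invertible (x : A) : Prop :=
  exists y, amul CA x y = aone CA /\ amul CA y x = aone CA.

Definition star_subalgebra_CXA (E : set (X -> A)) : Prop :=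
  (forall f, E f -> continuous f) /\
  E (fun _ => 0) /\
  (forall f g, E f -> E g -> E (fun x => f x + g x)) /\
  (forall (a : R[i]) f, E f -> E (fun x => a *: f x)) /\
  (forall f g, E f -> E g -> E (fun x => amul CA (f x) (g x))) /\
  (forall f, E f -> E (fun x => astar CA (f x))).

Definition uniform_closure (E : set (X -> A)) (g : X -> A) : Prop :=
  forall e : R[i], 0 < e -> exists2 f, E f & forall x, `|g x - f x| < e.

End Defs.

From Pilot Require Import Defs.
From HB Require Import structures.
From mathcomp Require Import all_boot all_order all_algebra.
From mathcomp Require Import all_classical all_reals all_analysis.
From mathcomp Require Import complex ring.
Import Order.TTheory GRing.Theory Num.Theory ComplexField.
Import numFieldNormedType.Exports.
Local Open Scope ring_scope.
Local Open Scope classical_set_scope.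

(* If 1 is a uniform limit of elements of E, some f in E has |1 - f(x)| < 1 for
   every x, so every f(x) is invertible by the Neumann series.
   Conversely, if f(x) is invertible then s := f^* f / M (M bounding |f^* f|) is
   a self-adjoint contraction invertible at x, and h := s^2 in E satisfies
   |1 - h| <= 1 everywhere and |1 - h(x)| < 1.  These estimates replace the
   continuous functional calculus: the iteration Y |-> (z + Y^2)/2 produces
   1 - sqrt(1 - z) as a limit of polynomials in z, and the C*-identity gives
   |r^2| <= |r^2 + q^2| for commuting self-adjoint r, q.  By compactness finitely
   many such h_i cover X, and g := 1 - prod_i (1 - h_i), which lies in E, has
   |1 - g| <= t < 1 uniformly; then 1 - (1 - g)^n is in E and within t^n of 1. *)

Section ComplexScalars.
Context {R : realType}.

Lemma complex_archi_bound (x : R[i]) : x \is Num.real -> exists n : nat, x < n%:R.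
Proof.
move=> /complex_realP [k ->]; exists (Num.Def.archi_bound `|k|).
rewrite -(rmorph_nat (real_complex R)) ltcR.
exact: le_lt_trans (ler_norm k) (archi_boundP (normr_ge0 k)).
Qed.

Lemma exists_expr_lt (x e : R[i]) : 0 <= x -> x < 1 -> 0 < e -> exists n, x ^+ n < e.
Proof.
move=> x0 x1 e0; have [t xt] := complex_realP _ (ger0_real x0).
have [k ek] := complex_realP _ (gtr0_real e0).
move: x0 x1 e0; rewrite xt ek -(rmorph0 (real_complex R)) -(rmorph1 (real_complex R)).
rewrite lecR !ltcR => t0 t1 k0.
have t_norm : `|t| < 1 by rewrite ger0_norm.
have [N _ tN] := (cvgrPdist_lt _ _).1 (cvg_expr t_norm) k k0.
exists N; rewrite -rmorphXn ltcR.
by have := tN N (leqnn N); rewrite /= sub0r normrN ger0_norm // exprn_ge0.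
Qed.

Lemma ler_of_le_add_small (x y c : R[i]) (b : nat -> R[i]) : 0 < c ->
  (forall e, 0 < e -> exists n, b n < e) ->
  (forall n, x <= y + c * b n) -> x <= y.
Proof.
move=> c0 small le_xy; apply/ler_addgt0Pr => e e0.
have [n lt_e] := small (e / c) (divr_gt0 e0 c0).
by apply: le_trans (le_xy n) _; rewrite lerD2l -ler_pdivlMl // mulrC; exact: ltW.
Qed.

(* The iteration [Y |-> (z + Y^2) / 2] started at 0, at z = 1 in the scalars;
   it dominates the norms of the iterates for every contraction z. *)
Fixpoint sqrt_bound (n : nat) : R[i] :=
  if n is m.+1 then 2^-1 * (1 + sqrt_bound m ^+ 2) else 0.

Lemma sqrt_bound_ge0 n : 0 <= sqrt_bound n.
Proof.
by elim: n => //= n IH; rewrite mulr_ge0 ?invr_ge0 ?ler0n ?addr_ge0 ?exprn_ge0.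
Qed.

Lemma sqrt_bound_le1 n : sqrt_bound n <= 1.
Proof.
elim: n => [|n IH] /=; first exact: ler01.
have sqr_le1 : sqrt_bound n ^+ 2 <= 1 by rewrite expr_le1 ?sqrt_bound_ge0.
by rewrite ler_pdivrMl ?ltr0n // mulr1 -natr1 addrC lerD2r.
Qed.

(* The bound is at most 1, so its increments cannot all stay above e. *)
Lemma sqrt_bound_step_small e : 0 < e -> exists n, sqrt_bound n.+1 - sqrt_bound n < e.
Proof.
move=> e0; have [//|small] := pselect (exists n, sqrt_bound n.+1 - sqrt_bound n < e).
have step_ge n : e <= sqrt_bound n.+1 - sqrt_bound n.
  have bound_real k : sqrt_bound k \is Num.real by rewrite ger0_real ?sqrt_bound_ge0.
  rewrite real_leNgt ?rpredB ?(gtr0_real e0) //.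
  by apply/negP => lt_e; apply: small; exists n.
have bound_ge : forall n, n%:R * e <= sqrt_bound n.
  elim=> [|n IH]; first by rewrite mul0r.
  rewrite -natr1 mulrDl mul1r -[sqrt_bound n.+1](subrK (sqrt_bound n)) addrC.
  exact: lerD.
have inv_e_gt0 : 0 < e^-1 by rewrite invr_gt0.
have [N lt_N] := complex_archi_bound _ (gtr0_real inv_e_gt0).
have := le_trans (bound_ge N) (sqrt_bound_le1 N).
by rewrite -ler_pdivlMr // mul1r => /(lt_le_trans lt_N); rewrite ltxx.
Qed.

End ComplexScalars.

Section UnitalCstarAlgebra.
Context {R : realType} {A : completeNormedModType R[i]} {CA : unital_Cstar_algebra A}.
Local Notation mul := (amul CA).
Local Notation one := (aone CA).
Local Notation star := (astar CA).

Lemma amul0x x : mul 0 x = 0.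
Proof. by apply: (addrI (mul 0 x)); rewrite -mulDl !addr0. Qed.

Lemma amulx0 x : mul x 0 = 0.
Proof. by apply: (addrI (mul x 0)); rewrite -mulDr !addr0. Qed.

Lemma amulNx x y : mul (- x) y = - mul x y.
Proof. by apply/eqP; rewrite -subr_eq0 opprK -mulDl addNr amul0x. Qed.

Lemma amulxN x y : mul x (- y) = - mul x y.
Proof. by apply/eqP; rewrite -subr_eq0 opprK -mulDr addNr amulx0. Qed.

Lemma amulBx x y z : mul (x - y) z = mul x z - mul y z.
Proof. by rewrite mulDl amulNx. Qed.

Lemma amulxB x y z : mul x (y - z) = mul x y - mul x z.
Proof. by rewrite mulDr amulxN. Qed.

Lemma astar0 : star 0 = 0.
Proof. by apply: (addrI (star 0)); rewrite -starD !addr0. Qed.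

Lemma astarB x y : star (x - y) = star x - star y.
Proof.
suff starN : star (- y) = - star y by rewrite starD starN.
by apply/eqP; rewrite -subr_eq0 opprK -starD addNr astar0.
Qed.

Lemma astar1 : star one = one.
Proof. by rewrite -[star one](mulx1 CA) -[X in mul _ X](starK CA) -starM mulx1 starK. Qed.

Lemma norm_astar x : `|star x| = `|x|.
Proof.
suff le_star y : `|y| <= `|star y|.
  by apply/eqP; rewrite eq_le le_star -{2}[x](starK CA) le_star.
have [->|y0] := eqVneq y 0; first by rewrite normr0.
have y_gt0 : 0 < `|y| by rewrite normr_gt0.
rewrite -(ler_pM2r y_gt0) -expr2 -(Cstar_identity CA).
exact: normM_le.
Qed.

Lemma norm_aone : `|one| <= 1.
Proof.
have [->|one0] := eqVneq `|one| 0; first exact: ler01.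
have := Cstar_identity CA one; rewrite astar1 mulx1 expr2 -{1}[`|one|]mul1r.
by move=> /(mulIf one0) <-.
Qed.

Lemma norm_amul_le1 x y : `|x| <= 1 -> `|y| <= 1 -> `|mul x y| <= 1.
Proof.
move=> x1 y1; apply: le_trans (normM_le CA x y) _.
by rewrite -[1]mulr1; apply: ler_pM.
Qed.

Lemma invertible_star x : invertible CA x -> invertible CA (star x).
Proof. by case=> y [xy yx]; exists (star y); rewrite -!starM xy yx astar1. Qed.

Lemma invertible_mul x y :
  invertible CA x -> invertible CA y -> invertible CA (mul x y).
Proof.
move=> [x' [xx' x'x]] [y' [yy' y'y]]; exists (mul y' x'); split.
  by rewrite -Defs.mulA [mul y _]Defs.mulA yy' mul1x.
by rewrite -Defs.mulA [mul x' _]Defs.mulA x'x mul1x.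
Qed.

Lemma invertible_scale (a : R[i]) x :
  a != 0 -> invertible CA x -> invertible CA (a *: x).
Proof.
move=> a0 [y [xy yx]]; exists (a^-1 *: y).
by rewrite !(mulZl, mulZr) !scalerA mulfV // xy yx scale1r.
Qed.

(* With v := r + i q one has v^* v = r^2 + q^2 and 2 r = v + v^*, so the
   C*-identity gives |r^2| <= |r|^2 <= |v|^2 = |r^2 + q^2|. *)
Lemma norm_sqr_le_add_sqr r q : star r = r -> star q = q ->
  mul r q = mul q r -> `|mul r r| <= `|mul r r + mul q q|.
Proof.
move=> sr sq rq; pose v := r + 'i *: q.
have sv : star v = r - 'i *: q by rewrite starD starZ sr sq conjCi scaleNr.
have vv : mul (star v) v = mul r r + mul q q.
  rewrite sv !(mulDl, mulDr, amulNx, mulZl, mulZr) rq scalerA -expr2 sqrCi.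
  by rewrite scaleN1r opprK addrA addrK.
have r_v : r *+ 2 = v + star v by rewrite sv addrACA subrr addr0 mulr2n.
have le_rv : `|r| <= `|v|.
  by have := ler_normD v (star v); rewrite -r_v norm_astar normrMn -mulr2n lerMn2r.
apply: le_trans (normM_le CA r r) _; rewrite -vv Cstar_identity expr2.
exact: ler_pM.
Qed.

(* [sqrt_approx z n] tends to 1 - sqrt (1 - z): the fixed points of
   [Y |-> (z + Y^2) / 2] are the Y with (1 - Y)^2 = 1 - z. *)
Fixpoint sqrt_approx (z : A) (n : nat) : A :=
  if n is m.+1 then 2^-1 *: (z + mul (sqrt_approx z m) (sqrt_approx z m)) else 0.

Lemma sqrt_approx_comm z w : mul w z = mul z w ->
  forall n, mul w (sqrt_approx z n) = mul (sqrt_approx z n) w.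
Proof.
move=> wz; elim=> [|n IH] /=; first by rewrite amulx0 amul0x.
by rewrite mulZl mulZr mulDl mulDr wz Defs.mulA IH -Defs.mulA IH Defs.mulA.
Qed.

Lemma sqrt_approx_star z : star z = z -> forall n, star (sqrt_approx z n) = sqrt_approx z n.
Proof.
move=> sz; elim=> [|n IH] /=; first exact: astar0.
by rewrite starZ conj_Creal ?rpredV ?realn // starD starM IH sz.
Qed.

Lemma sqr_one_sub_sqrt_approx z n :
  mul (one - sqrt_approx z n) (one - sqrt_approx z n) =
  one - z + 2 *: (sqrt_approx z n.+1 - sqrt_approx z n).
Proof.
rewrite [sqrt_approx z n.+1]/= scalerBr scalerA mulfV ?pnatr_eq0 // scale1r.
rewrite amulBx !amulxB !mul1x mulx1 scaler_nat mulr2n.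
by rewrite opprB opprD !addrA subrK (addrAC one).
Qed.

Section Contraction.
Variables (z : A) (z_le1 : `|z| <= 1).

Lemma norm_sqrt_approx n : `|sqrt_approx z n| <= sqrt_bound n.
Proof.
elim: n => [|n IH] /=; first by rewrite normr0.
rewrite normrZ ger0_norm ?invr_ge0 ?ler0n // ler_pM2l ?invr_gt0 ?ltr0n //.
apply: le_trans (ler_normD _ _) _; apply: lerD => //.
by apply: le_trans (normM_le CA _ _) _; rewrite expr2; apply: ler_pM.
Qed.

Lemma norm_sqrt_approx_step n :
  `|sqrt_approx z n.+1 - sqrt_approx z n| <= sqrt_bound n.+1 - sqrt_bound n.
Proof.
elim: n => [|n IH]; first by rewrite !subr0 norm_sqrt_approx.
set Y1 := sqrt_approx z n.+1; set Y0 := sqrt_approx z n.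
have Y10 : mul Y1 Y0 = mul Y0 Y1.
  by apply/esym/sqrt_approx_comm; rewrite sqrt_approx_comm.
have -> : sqrt_approx z n.+2 - Y1 = 2^-1 *: mul (Y1 - Y0) (Y1 + Y0).
  rewrite [sqrt_approx z n.+2]/= {2}/Y1 /= -scalerBr -/Y0; congr (_ *: _).
  by rewrite amulBx !mulDr Y10 opprD addrACA subrr add0r addrKA.
have -> : sqrt_bound n.+2 - sqrt_bound n.+1 =
    2^-1 * ((sqrt_bound n.+1 - sqrt_bound n) * (sqrt_bound n.+1 + sqrt_bound n)) :> R[i].
  by rewrite /=; ring.
rewrite normrZ ger0_norm ?invr_ge0 ?ler0n // ler_pM2l ?invr_gt0 ?ltr0n //.
apply: le_trans (normM_le CA _ _) _; apply: ler_pM => //.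
by apply: le_trans (ler_normD _ _) _; apply: lerD; apply: norm_sqrt_approx.
Qed.

Lemma sqrt_approx_step_small e : 0 < e ->
  exists n, `|sqrt_approx z n.+1 - sqrt_approx z n| < e.
Proof.
move=> /sqrt_bound_step_small [n lt_e]; exists n.
exact: le_lt_trans (norm_sqrt_approx_step n) lt_e.
Qed.

End Contraction.

(* Apply [norm_sqr_le_add_sqr] to r := 1 - Y_n, whose square is
   1 - z + 2 (Y_(n+1) - Y_n), and let n grow. *)
Lemma norm_one_sub_le_add_sqr z q : star z = z -> `|z| <= 1 ->
  star q = q -> mul q z = mul z q -> `|one - z| <= `|one - z + mul q q|.
Proof.
move=> sz z1 sq qz.
apply: (@ler_of_le_add_small _ _ _ 4 _ _ (sqrt_approx_step_small _ z1)) => // n.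
set d := sqrt_approx z n.+1 - sqrt_approx z n.
pose r := one - sqrt_approx z n.
have sr : star r = r by rewrite astarB astar1 sqrt_approx_star.
have rq : mul r q = mul q r.
  by rewrite amulBx amulxB mul1x mulx1 (sqrt_approx_comm _ _ qz).
have := norm_sqr_le_add_sqr _ _ sr sq rq; rewrite sqr_one_sub_sqrt_approx -/d.
move=> le_sqr; rewrite -{1}[one - z](addrK (2 *: d)).
apply: le_trans (ler_normB _ _) _; rewrite (addrAC _ _ (mul q q)) in le_sqr.
apply: (le_trans (lerD le_sqr (lexx _))).
apply: le_trans (lerD (ler_normD _ _) (lexx _)) _.
by rewrite normrZ normr_nat -addrA lerD2l -mulrDl -natrD.
Qed.

(* q_n := s (1 - Y_n) is self-adjoint, commutes with s^2, and
   1 - s^2 + q_n^2 = 1 - s^2 z + 2 s^2 (Y_(n+1) - Y_n). *)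
Lemma norm_one_sub_sqr_le_mulr s z : star s = s -> `|s| <= 1 ->
  star z = z -> `|z| <= 1 -> mul s z = mul z s ->
  `|one - mul s s| <= `|one - mul (mul s s) z|.
Proof.
move=> ss s1 sz z1 sz_comm.
apply: (@ler_of_le_add_small _ _ _ 2 _ _ (sqrt_approx_step_small _ z1)) => // n.
set d := sqrt_approx z n.+1 - sqrt_approx z n.
pose r := one - sqrt_approx z n.
have sr : star r = r by rewrite astarB astar1 sqrt_approx_star.
have sr_comm : mul s r = mul r s.
  by rewrite amulBx amulxB mul1x mulx1 (sqrt_approx_comm _ _ sz_comm).
pose q := mul s r.
have sq : star q = q by rewrite /q starM sr ss sr_comm.
have q_comm : mul q (mul s s) = mul (mul s s) q.
  rewrite /q -!Defs.mulA; congr (mul s _).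
  by rewrite Defs.mulA -sr_comm -Defs.mulA -sr_comm.
have qq : mul q q = mul (mul s s) (mul r r).
  rewrite /q -!Defs.mulA; congr (mul s _).
  by rewrite Defs.mulA -sr_comm -Defs.mulA.
have sss : star (mul s s) = mul s s by rewrite starM ss.
have := norm_one_sub_le_add_sqr _ _ sss (norm_amul_le1 _ _ s1 s1) sq q_comm.
rewrite qq sqr_one_sub_sqrt_approx -/d mulDr amulxB mulx1 mulZr !addrA subrK.
move=> /le_trans; apply; apply: le_trans (ler_normD _ _) _.
rewrite lerD2l normrZ normr_nat ler_pM2l ?ltr0n //.
by apply: le_trans (normM_le CA _ _) _; apply: ler_piMl; rewrite ?norm_amul_le1.
Qed.

Lemma norm_one_sub_sqr_le1 s : star s = s -> `|s| <= 1 -> `|one - mul s s| <= 1.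
Proof.
move=> ss s1; apply: le_trans (norm_one_sub_sqr_le_mulr _ 0 ss s1 astar0 _ _) _.
- by rewrite normr0.
- by rewrite amulx0 amul0x.
- by rewrite amulx0 subr0 norm_aone.
Qed.

(* The inverse b of s is self-adjoint; with c := |b| + 1, the element
   z := (b / c)^2 is a self-adjoint contraction commuting with s, and
   s^2 z = c^-2. *)
Lemma norm_one_sub_sqr_lt1 s : star s = s -> `|s| <= 1 -> invertible CA s ->
  `|one - mul s s| < 1.
Proof.
move=> ss s1 [b [sb bs]].
have sbb : star b = b.
  have bs' : mul (star b) s = one by rewrite -{1}ss -starM sb astar1.
  by rewrite -[star b](mulx1 CA) -sb Defs.mulA bs' mul1x.
pose c : R[i] := `|b| + 1.
have c_ge1 : 1 <= c by rewrite lerDr.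
have c_gt0 : 0 < c := lt_le_trans ltr01 c_ge1.
have inv_c_ge0 : 0 <= c^-1 by rewrite invr_ge0; exact: ltW.
have inv_c_le1 : c^-1 <= 1 by rewrite invf_le1.
pose k := c^-1 * c^-1.
have k_le1 : k <= 1 by apply: mulr_ile1.
have k_gt0 : 0 < k by rewrite mulr_gt0 ?invr_gt0.
pose t := c^-1 *: b.
have st : star t = t by rewrite starZ conj_Creal ?rpredV ?gtr0_real // sbb.
have t1 : `|t| <= 1 by rewrite normrZ ger0_norm // ler_pdivrMl // mulr1 lerDl.
pose z := mul t t.
have sz : star z = z by rewrite starM st.
have sz_comm : mul s z = mul z s.
  by rewrite /z /t !(mulZl, mulZr) Defs.mulA sb mul1x -Defs.mulA bs mulx1.
have ssz : mul (mul s s) z = k *: one.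
  rewrite /z /t !(mulZl, mulZr) scalerA; congr (_ *: _).
  by rewrite -Defs.mulA [mul s (mul b b)]Defs.mulA sb mul1x sb.
have := norm_one_sub_sqr_le_mulr _ _ ss s1 sz (norm_amul_le1 _ _ t1 t1) sz_comm.
have -> : one - mul (mul s s) z = (1 - k) *: one by rewrite ssz scalerBl scale1r.
rewrite normrZ ger0_norm ?subr_ge0 // => /le_lt_trans; apply.
by apply: le_lt_trans (ler_piMr _ norm_aone) _; rewrite ?subr_ge0 ?gtrBl.
Qed.

Fixpoint apow (u : A) (n : nat) : A := if n is m.+1 then mul u (apow u m) else one.

Lemma norm_apow u n : `|apow u n| <= `|u| ^+ n.
Proof.
elim: n => [|n IH] /=; first by rewrite expr0 norm_aone.
by apply: le_trans (normM_le CA _ _) _; rewrite exprS ler_wpM2l.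
Qed.

Lemma apowSr u n : mul (apow u n) u = apow u n.+1.
Proof. by elim: n => [|n IH] /=; rewrite ?mul1x ?mulx1 // -Defs.mulA IH. Qed.

Lemma cvg_apow u : `|u| < 1 -> apow u n @[n --> \oo] --> 0.
Proof.
move=> u1; apply/cvgrPdist_lt => e e0.
have [N uN] := exists_expr_lt _ _ (normr_ge0 u) u1 e0.
exists N => // n /= Nn; rewrite sub0r normrN.
apply: le_lt_trans (norm_apow _ _) (le_lt_trans _ uN).
by apply: ler_wiXn2l => //; exact: ltW.
Qed.

Lemma mul_one_sub_series_apow u n : mul (one - u) (series (apow u) n) = one - apow u n.
Proof.
elim: n => [|n IH]; first by rewrite seriesEnat /= big_geq // amulx0 subrr.
by rewrite seriesSr mulDr IH amulBx mul1x addrA subrK.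
Qed.

Lemma mul_series_apow_one_sub u n : mul (series (apow u) n) (one - u) = one - apow u n.
Proof.
elim: n => [|n IH]; first by rewrite seriesEnat /= big_geq // amul0x subrr.
by rewrite seriesSr mulDl IH amulxB mulx1 apowSr addrA subrK.
Qed.

Lemma norm_sum_apow_le u m n : `|u| < 1 ->
  `|\sum_(m <= k < m + n) apow u k| <= `|u| ^+ m / (1 - `|u|).
Proof.
move=> u1; apply: le_trans (ler_norm_sum _ _ _) _.
apply: le_trans (ler_sum _ (fun k _ => norm_apow u k)) _.
rewrite geometric_partial_tail geometric_seriesE ?lt_eqF //=.
have inv_ge0 : 0 <= (1 - `|u|)^-1 by rewrite invr_ge0 subr_ge0; exact: ltW.
apply: ler_wpM2r => //; rewrite -[leRHS]mulr1.
by apply: ler_wpM2l; rewrite ?exprn_ge0 // gerBl exprn_ge0.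
Qed.

Lemma cvg_series_apow u : `|u| < 1 -> cvgn (series (apow u)).
Proof.
move=> u1; apply/cauchy_cvgP/cauchy_seriesP => e e0.
have u1_gt0 : 0 < 1 - `|u| by rewrite subr_gt0.
have [N uN] := exists_expr_lt _ _ (normr_ge0 u) u1 (mulr_gt0 e0 u1_gt0).
exists ([set n | (N <= n)%N], [set n | (N <= n)%N]) => [|[m n] /= [Nm Nn]].
  by split; exists N.
have [mn|nm] := leqP m n; last by rewrite big_geq ?normr0 // ltnW.
rewrite -(subnKC mn); apply: le_lt_trans (norm_sum_apow_le _ _ _ u1) _.
rewrite ltr_pdivrMr //; apply: le_lt_trans uN.
by apply: ler_wiXn2l => //; exact: ltW.
Qed.

Lemma cvg_amull a (v : nat -> A) l :
  v n @[n --> \oo] --> l -> mul a (v n) @[n --> \oo] --> mul a l.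
Proof.
move=> /cvgrPdist_lt vl; apply/cvgrPdist_lt => e e0.
have a1 : 0 < `|a| + 1 by apply: ltr_wpDl.
apply: filterS (vl _ (divr_gt0 e0 a1)) => n /= lt_n.
rewrite -amulxB; apply: le_lt_trans (normM_le CA _ _) _.
apply: le_lt_trans (_ : _ <= (`|a| + 1) * `|l - v n|) _.
  by rewrite ler_wpM2r // lerDl.
by rewrite mulrC -ltr_pdivlMr.
Qed.

Lemma cvg_amulr a (v : nat -> A) l :
  v n @[n --> \oo] --> l -> mul (v n) a @[n --> \oo] --> mul l a.
Proof.
move=> /cvgrPdist_lt vl; apply/cvgrPdist_lt => e e0.
have a1 : 0 < `|a| + 1 by apply: ltr_wpDl.
apply: filterS (vl _ (divr_gt0 e0 a1)) => n /= lt_n.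
rewrite -amulBx; apply: le_lt_trans (normM_le CA _ _) _.
apply: le_lt_trans (_ : _ <= `|l - v n| * (`|a| + 1)) _.
  by rewrite ler_wpM2l // lerDl.
by rewrite -ltr_pdivlMr.
Qed.

(* The Neumann series: (1 - u)^-1 = sum_n u^n. *)
Lemma norm_one_sub_lt1_invertible a : `|one - a| < 1 -> invertible CA a.
Proof.
set u := one - a => u1; have a_u : a = one - u by rewrite opprB addrC subrK.
have lim_pow : one - apow u n @[n --> \oo] --> one.
  by rewrite -[X in _ --> X]subr0; apply: cvgB; [exact: cvg_cst | exact: cvg_apow].
have Sl := cvg_series_apow _ u1; set l := limn _ in Sl.
exists l; split.
- apply: (cvg_unique (@norm_hausdorff _ A) (F := mul a (series (apow u) n) @[n --> \oo])).
    exact: cvg_amull.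
  by rewrite /= a_u (funext (mul_one_sub_series_apow u)); exact: lim_pow.
- apply: (cvg_unique (@norm_hausdorff _ A) (F := mul (series (apow u) n) a @[n --> \oo])).
    exact: cvg_amulr.
  by rewrite /= a_u (funext (mul_series_apow_one_sub u)); exact: lim_pow.
Qed.

Definition circ (x y : A) : A := x + y - mul x y.

Lemma one_sub_circ x y : one - circ x y = mul (one - x) (one - y).
Proof.
rewrite amulBx !amulxB !mul1x mulx1 /circ !opprB opprD !addrA.
by rewrite addrAC (addrAC one (- y)).
Qed.

Lemma norm_one_sub_foldr_circ (s : seq A) :
  `|one - foldr circ 0 s| <= \prod_(a <- s) `|one - a|.
Proof.
elim: s => [|a s IH] /=; first by rewrite subr0 big_nil norm_aone.
rewrite big_cons one_sub_circ; apply: le_trans (normM_le CA _ _) _.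
exact: ler_wpM2l.
Qed.

End UnitalCstarAlgebra.

Arguments circ {R A} CA x y.

(* [compact_cover] is stated for pointed spaces; an inhabited space can be
   pointed at any of its elements. *)
Section PointedAt.
Variables (X : topologicalType) (x0 : X).
Let pointed_at : Type := X.
HB.instance Definition _ := Topological.on pointed_at.
HB.instance Definition _ := isPointed.Build pointed_at x0.

Lemma inhabited_compact_cover : compact [set: X] -> cover_compact [set: X].
Proof.
change (compact [set: pointed_at] -> cover_compact [set: pointed_at]).
by rewrite compact_cover.
Qed.
End PointedAt.

Section CompactSpace.
Context {X : topologicalType}.
Hypothesis cptX : compact [set: X].

Lemma compact_finite_subcover (I : choiceType) (U : I -> set X) :
  (forall i, open (U i)) -> (forall y, exists i, U i y) ->
  exists s : seq I, forall y, exists2 i, i \in s & U i y.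
Proof.
move=> oU covU; have [[x0 _]|X0] := pselect (exists x : X, True); last first.
  by exists [::] => y; exfalso; apply: X0; exists y.
have := inhabited_compact_cover X x0 cptX I setT U (fun i _ => oU i).
case=> [y _|D _ DU].
  by have [i Ui] := covU y; exists i.
by exists (finmap.enum_fset D) => y; have [i Di Ui] := DU y Logic.I; exists i.
Qed.

Lemma compact_nondecreasing_cover (V : nat -> set X) :
  (forall m, open (V m)) -> {homo V : m n / (m <= n)%N >-> m `<=` n} ->
  (forall y, exists m, V m y) -> exists m, forall y, V m y.
Proof.
move=> oV incV covV; have [s sV] := compact_finite_subcover _ _ oV covV.
exists (\max_(i <- s) i) => y; have [i si Viy] := sV y.
have : (i <= \max_(j <- s) j)%N by apply: leq_bigmax_seq.
by move/incV; apply.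
Qed.

Context {R : realType} {A : completeNormedModType R[i]}.

Lemma open_norm_lt (f : X -> A) (r : R[i]) : continuous f -> open [set y | `|f y| < r].
Proof.
move=> cf; have -> : [set y | `|f y| < r] = f @^-1` ball 0 r.
  by apply/seteqP; split => y; rewrite /= -ball_normE /= sub0r normrN.
by move/continuousP: cf; apply; exact: ball_open.
Qed.

Lemma compact_norm_bounded (f : X -> A) : continuous f ->
  exists2 M : R[i], 0 < M & forall y, `|f y| <= M.
Proof.
move=> cf; pose V m := [set y | `|f y| < m.+1%:R].
have [m Vm] : exists m, forall y, V m y.
  apply: compact_nondecreasing_cover => [m|m n mn y|y]; first exact: open_norm_lt.
    by move=> /lt_le_trans; apply; rewrite ler_nat.
  have [m ltm] := complex_archi_bound _ (normr_real (f y)).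
  by exists m; apply: lt_le_trans ltm _; rewrite ler_nat.
by exists m.+1%:R => // y; exact/ltW/Vm.
Qed.

Lemma compact_norm_lt1_uniform (f : X -> A) : continuous f ->
  (forall y, `|f y| < 1) -> exists2 t : R[i], 0 <= t < 1 & forall y, `|f y| <= t.
Proof.
move=> cf f1; pose V m := [set y | `|f y| < 1 - m.+1%:R^-1].
have [m Vm] : exists m, forall y, V m y.
  apply: compact_nondecreasing_cover => [m|m n mn y|y]; first exact: open_norm_lt.
    move=> /lt_le_trans; apply; rewrite lerD2l lerN2 lef_pV2 ?posrE ?ltr0n //.
    by rewrite ler_nat.
  have inv_gt0 : 0 < (1 - `|f y|)^-1 by rewrite invr_gt0 subr_gt0.
  have [m ltm] := complex_archi_bound _ (gtr0_real inv_gt0).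
  exists m; rewrite /V /= ltrBrDr addrC -ltrBrDr -[1 - _]invrK ltf_pV2 ?posrE ?ltr0n //.
  by apply: lt_le_trans ltm _; rewrite ler_nat.
exists (1 - m.+1%:R^-1) => [|y]; last exact/ltW/Vm.
by rewrite subr_ge0 invf_le1 ?ltr0n // ler1n gtrBl invr_gt0 ltr0n.
Qed.

End CompactSpace.

Section StarSubalgebra.
Context {R : realType} {A : completeNormedModType R[i]} {CA : unital_Cstar_algebra A}.
Local Notation mul := (amul CA).
Local Notation one := (aone CA).
Local Notation star := (astar CA).
Context {X : topologicalType} {E : set (X -> A)}.
Hypotheses (E_star : star_subalgebra_CXA CA E) (cptX : compact [set: X]).

Lemma star_subalgebra_one_sub_continuous g : E g -> continuous (fun y => one - g y).
Proof. by move=> Eg y; apply: cvgB; [exact: cvg_cst | exact: E_star.1]. Qed.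

Lemma star_subalgebra_foldr_circ (I : Type) (h : I -> X -> A) (s : seq I) :
  (forall i, E (h i)) -> E (fun y => foldr (circ CA) 0 [seq h i y | i <- s]).
Proof.
case: E_star => _ [E0 [ED [EZ [EM _]]]] Eh; elim: s => [|i s IH] //=.
set g := fun y => foldr _ _ _ in IH *.
have -> : (fun y => circ CA (h i y) (g y)) = fun y => h i y + g y + (-1) *: mul (h i y) (g y).
  by apply/funext => y; rewrite scaleN1r.
exact: ED (ED _ _ (Eh i) IH) (EZ _ _ (EM _ _ (Eh i) IH)).
Qed.

(* s := f^* f / M is a self-adjoint contraction, invertible at x; take s^2. *)
Lemma star_subalgebra_near_one_at x f : E f -> invertible CA (f x) ->
  exists h, [/\ E h, forall y, `|one - h y| <= 1 & `|one - h x| < 1].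
Proof.
move=> Ef fx_inv; case: E_star => Econt [_ [_ [EZ [EM Estar]]]].
pose k y := mul (star (f y)) (f y).
have Ek : E k := EM _ _ (Estar _ Ef) Ef.
have [M M0 kM] := compact_norm_bounded cptX _ (Econt _ Ek).
have M_inv_ge0 : 0 <= M^-1 by rewrite invr_ge0; exact: ltW.
pose s y := M^-1 *: k y.
have ss y : star (s y) = s y.
  by rewrite starZ conj_Creal ?rpredV ?gtr0_real // starM starK.
have s1 y : `|s y| <= 1 by rewrite normrZ ger0_norm // ler_pdivrMl // mulr1.
exists (fun y => mul (s y) (s y)); split.
- exact: EM (EZ _ _ Ek) (EZ _ _ Ek).
- by move=> y; apply: norm_one_sub_sqr_le1.
apply: norm_one_sub_sqr_lt1 => //; apply: invertible_scale; first by rewrite invr_eq0 gt_eqF.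
exact/invertible_mul/fx_inv/invertible_star.
Qed.

(* Finitely many of the local h cover X; their circle product g satisfies
   |1 - g y| <= prod_x |1 - h_x y| <= 1, with a factor < 1 at every y. *)
Lemma star_subalgebra_near_one :
  (forall x, exists h, [/\ E h, forall y, `|one - h y| <= 1 & `|one - h x| < 1]) ->
  exists2 g, E g & forall y, `|one - g y| < 1.
Proof.
move=> /choice [h hP].
have Eh x : E (h x) by case: (hP x).
have h_le1 x y : `|one - h x y| <= 1 by case: (hP x).
have h_lt1 x : `|one - h x x| < 1 by case: (hP x).
have [s sP] := compact_finite_subcover cptX _ (fun x => [set y | `|one - h x y| < 1])
  (fun x => open_norm_lt _ _ (star_subalgebra_one_sub_continuous _ (Eh x)))
  (fun y => ex_intro _ y (h_lt1 y)).
exists (fun y => foldr (circ CA) 0 [seq h x y | x <- s]).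
  exact: star_subalgebra_foldr_circ _ _ s Eh.
move=> y; have [x xs hxy] := sP y; apply: le_lt_trans (norm_one_sub_foldr_circ _) _.
rewrite big_map (big_rem x) //=; apply: le_lt_trans hxy.
by apply: ler_piMr; rewrite ?prodr_ile1 // => x' _; rewrite normr_ge0 h_le1.
Qed.

(* 1 - (1 - g)^n lies in E, as an n-fold circle power of g. *)
Lemma star_subalgebra_uniform_closure_one g : E g -> (forall y, `|one - g y| < 1) ->
  uniform_closure E (fun _ => one).
Proof.
move=> Eg g_lt1 e e0.
have [t /andP [t0 t1] gt] :=
  compact_norm_lt1_uniform cptX _ (star_subalgebra_one_sub_continuous _ Eg) g_lt1.
have [n tn] := exists_expr_lt _ _ t0 t1 e0.
exists (fun y => foldr (circ CA) 0 [seq g y | _ <- nseq n tt]).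
  exact: star_subalgebra_foldr_circ _ _ (nseq n tt) (fun=> Eg).
move=> y; apply: le_lt_trans (norm_one_sub_foldr_circ _) (le_lt_trans _ tn).
by rewrite big_map big_nseq iter_mulr_1 lerXn2r ?nnegrE.
Qed.

End StarSubalgebra.

Theorem lemma2p5 (R : realType) (X : topologicalType)
    (A : completeNormedModType R[i]) (CA : unital_Cstar_algebra A)
    (E : set (X -> A)) :
  compact [set: X] -> hausdorff_space X -> star_subalgebra_CXA CA E ->
  (uniform_closure E (fun _ => aone CA) <->
   (forall x : X, exists2 f, E f & invertible CA (f x))).
Proof.
move=> cptX _ E_star; split=> [one_cl x|units].
  have [f Ef f_near1] := one_cl 1 ltr01; exists f => //.
  exact/norm_one_sub_lt1_invertible/f_near1.
have [g Eg g_lt1] : exists2 g, E g & forall y, `|aone CA - g y| < 1.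
  apply: (star_subalgebra_near_one E_star cptX) => x.
  have [f Ef fx_inv] := units x.
  exact: star_subalgebra_near_one_at E_star cptX x f Ef fx_inv.
exact: star_subalgebra_uniform_closure_one E_star cptX g Eg g_lt1.
Qed.
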